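(* Let $\Gamma\in\mathbb{R}^{n\times m}$ and let $R:\mathbb{R}^n_{\ge0}\to\mathbb{R}^m$ be locally Lipschitz, such that the system $\dot S=\Gamma R(S)$ leaves $\mathbb{R}^n_{\ge0}$ invariant and is forward complete (every solution starting in $\mathbb{R}^n_{\ge0}$ is defined and stays in $\mathbb{R}^n_{\ge0}$ for all $t\ge0$). Fix $\sigma\in\mathbb{R}^n_{\ge0}$ and consider $\dot x=R(\sigma+\Gamma x)$ on $X_\sigma=\{x\in\mathbb{R}^m:\sigma+\Gamma x\ge0\}$. Then every solution of this system with initial condition in $X_\sigma$ is defined for all $t\ge0$ and remains in $X_\sigma$. Furthermore, if every solution of $\dot S=\Gamma R(S)$ in $\mathbb{R}^n_{\ge0}$ is bounded, then for every solution $x(t)$ of $\dot x=R(\sigma+\Gamma x)$ on $X_\sigma$, $\Gamma x(t)$ is bounded for $t\ge0$.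
   Context: Inequalities between vectors are componentwise. *)

From HB Require Import structures.
From mathcomp Require Import all_boot all_order all_algebra.
From mathcomp Require Import all_classical all_reals all_analysis.
Set Implicit Arguments. Unset Strict Implicit. Unset Printing Implicit Defensive.
Import Order.TTheory GRing.Theory Num.Theory.
Import numFieldNormedType.Exports.
Local Open Scope classical_set_scope.
Local Open Scope ring_scope.

Definition nonneg {R : realType} {n : nat} (v : 'cV[R]_n) : Prop :=
  forall i : 'I_n, 0 <= v i ord0.

Definition loc_lipschitz_on {R : realType} {n m : nat}
  (D : set 'cV[R]_n) (f : 'cV[R]_n -> 'cV[R]_m) : Prop :=
  forall p, D p -> exists2 r : R, 0 < r & exists L : R,
    forall u v, D u -> D v -> `|u - p| < r -> `|v - p| < r ->
      `|f u - f v| <= L * `|u - v|.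

(* x : J -> D is a solution of x' = F x on the time set J (an interval
   starting at 0): x stays in D, is continuous on J and differentiable
   with derivative F (x t) at every t in J with t > 0 (interior points). *)
Definition ode_sol {R : realType} {k : nat} (F : 'cV[R]_k -> 'cV[R]_k)
  (D : set 'cV[R]_k) (J : set R) (x : R -> 'cV[R]_k) : Prop :=
  (forall t, J t -> D (x t)) /\ {within J, continuous x} /\
  (forall t, J t -> 0 < t -> is_derive t 1 x (F (x t))).

(* "every solution is defined for all t >= 0 and stays in D" :
   from every initial point in D there is a solution on [0,+oo[, and every
   solution on a finite interval [0,T[ extends to a solution on [0,+oo[. *)
Definition forward_complete {R : realType} {k : nat}
  (F : 'cV[R]_k -> 'cV[R]_k) (D : set 'cV[R]_k) : Prop :=
  (forall x0, D x0 -> exists x, ode_sol F D `[0, +oo[%classic x /\ x 0 = x0) /\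
  (forall (T : R) x, 0 < T -> ode_sol F D `[0, T[%classic x ->
     exists y, ode_sol F D `[0, +oo[%classic y /\ (forall t, `[0, T[%classic t -> y t = x t)).

(* If x solves the reduced system then S := sigma + Gam x solves
   S' = Gam R(S), which settles the boundedness claim at once.  Conversely, if S
   solves the full system with S(0) = sigma + Gam x0, then
   y(t) := x0 + int_0^t R(S(s)) ds satisfies (sigma + Gam y)' = Gam R(S) = S',
   so sigma + Gam y = S and y solves the reduced system; this gives existence.
   For extension, a reduced solution on [0,T[ is mapped to a full one, which is
   extended by forward completeness and lifted back; the lift agrees with the
   original solution because the reduced field depends on x only through
   sigma + Gam x, so no uniqueness theorem for ODEs is needed. *)

From HB Require Import structures.
From mathcomp Require Import all_boot all_order all_algebra.
From mathcomp Require Import all_classical all_reals all_analysis.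
Set Implicit Arguments.
Unset Strict Implicit.
Unset Printing Implicit Defensive.

Import Order.TTheory GRing.Theory Num.Theory.
Import numFieldNormedType.Exports.
Local Open Scope classical_set_scope.
Local Open Scope ring_scope.

Lemma within_continuous_comp_within {U V W : topologicalType}
    (A : set U) (B : set V) (f : U -> V) (g : V -> W) :
  (forall x, A x -> B (f x)) ->
  {within B, continuous g} -> {within A, continuous f} ->
  {within A, continuous (g \o f)}.
Proof.
move=> fAB /subspace_continuousP cg /subspace_continuousP cf.
apply/subspace_continuousP => x Ax.
apply: cvg_comp (cg _ (fAB _ Ax)) => P /= BP.
have := cf x Ax [set z | B z -> P z] BP.
by apply: filterS2 (withinT A _) => y Ay; apply; exact: fAB.
Qed.

Section calculus.
Context {R : realType}.

Lemma in_itv0y (t : R) : `[0, +oo[%classic t = (0 <= t).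
Proof. by rewrite /= in_itv/= andbT. Qed.

Lemma continuous_max0_comp (W : topologicalType) (g : R -> W) :
  {within `[0, +oo[, continuous g} -> continuous (fun t => g (Num.max t (0 : R))).
Proof.
move=> cg; apply/continuous_subspace_setT.
apply: (@within_continuous_comp_within _ _ _ setT _ (fun t : R => Num.max t 0) g _ cg).
  by move=> t _; rewrite in_itv0y le_max lexx orbT.
apply: continuous_subspaceT => t.
exact: (@continuous_max R R (fun s : R => s : R^o) (fun _ => (0 : R^o)) t cvg_id (cvg_cst _)).
Qed.

Lemma ler_entry_mx_norm p q (A : 'M[R]_(p, q)) i j : `|A i j| <= `|A|.
Proof. by rewrite [leRHS]/Num.Def.normr/= mx_normrE; exact: (le_bigmax _ _ (i, j)). Qed.

Lemma mulmx_norm_bounded p q r (A : 'M[R]_(p, q)) :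
  exists2 C : R, 0 <= C & forall B : 'M[R]_(q, r), `|A *m B| <= C * `|B|.
Proof.
have C0 : 0 <= \sum_i \sum_k `|A i k| by do 2!apply: sumr_ge0 => ? _.
exists (\sum_i \sum_k `|A i k|) => // B.
rewrite [leLHS]/Num.Def.normr/= mx_normrE; apply: bigmax_le => [|[i j] _ /=].
  exact: mulr_ge0.
rewrite mxE (le_trans (ler_norm_sum _ _ _))//.
apply: (@le_trans _ _ ((\sum_k `|A i k|) * `|B|)).
  rewrite mulr_suml; apply: ler_sum => k _.
  by rewrite normrM ler_wpM2l// ler_entry_mx_norm.
rewrite ler_wpM2r// (bigD1 i)//= lerDl.
by apply: sumr_ge0 => ? _; apply: sumr_ge0.
Qed.

Lemma mulmx_continuous p q r (A : 'M[R]_(p, q)) :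
  continuous (mulmx A : 'M[R]_(q, r) -> 'M[R]_(p, r)).
Proof.
have [C C0 AC] := @mulmx_norm_bounded _ _ r A.
apply/bounded_linear_continuous/bounded_funP => e; exists (C * e) => B Be.
by rewrite (le_trans (AC B))// ler_wpM2l.
Qed.

Lemma is_derive_mxP p q (M : R -> 'M[R]_(p, q)) (t : R) (dM : 'M[R]_(p, q)) :
  is_derive t (1 : R) M dM <-> forall i j, is_derive t (1 : R) (fun s => M s i j) (dM i j).
Proof.
split=> [[dv <-] i j|dMij].
  have dvij := (derivable_mxP M t 1).1 dv i j.
  by apply: DeriveDef => //; rewrite derive_mx// mxE.
have dv : derivable M t 1 by apply/derivable_mxP => i j; case: (dMij i j).
apply: DeriveDef => //; rewrite derive_mx//; apply/matrixP => i j.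
by rewrite mxE; case: (dMij i j).
Qed.

Lemma is_derive_mulmx p q r (A : 'M[R]_(p, q)) (x : R -> 'M[R]_(q, r)) (t : R) dx :
  is_derive t (1 : R) x dx -> is_derive t (1 : R) (fun s => A *m x s) (A *m dx).
Proof.
move=> [/derivable1_diffP dx_diff <-].
have dA := linear_differentiable (x t) (@mulmx_continuous _ _ r A).
have dAx := differentiable_comp dx_diff dA.
apply: DeriveDef; first exact/derivable1_diffP.
by rewrite !deriveE// diff_comp// diff_lin//; exact: mulmx_continuous.
Qed.

Lemma is_derive_segment_eq p q (f g d : R -> 'M[R]_(p, q)) (a b : R) :
  a <= b -> {within `[a, b], continuous f} -> {within `[a, b], continuous g} ->
  (forall t, t \in `]a, b[ -> is_derive t (1 : R) f (d t)) ->
  (forall t, t \in `]a, b[ -> is_derive t (1 : R) g (d t)) ->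
  f a = g a -> f b = g b.
Proof.
move=> ab cf cg df dg fga; apply/matrixP => i j; apply/eqP; rewrite -subr_eq0.
have [||c _] := @MVT_segment R (fun s => f s i j - g s i j) (fun=> 0) a b ab.
- move=> t tab; rewrite -(subrr (d t i j)).
  apply: is_deriveB; [exact: (is_derive_mxP _ _ _).1 (df t tab) i j|
  exact: (is_derive_mxP _ _ _).1 (dg t tab) i j].
- apply: (@within_continuousB _ _ _ _ (fun s => f s i j) (fun s => g s i j)).
  + by apply: (@within_continuous_comp _ _ _ _ f (fun M => M i j)) => // M _; exact: coord_continuous.
  + by apply: (@within_continuous_comp _ _ _ _ g (fun M => M i j)) => // M _; exact: coord_continuous.
- by rewrite fga subrr subr0 mul0r => ->.
Qed.

Lemma is_derive_integral (f : R -> R) (a t : R) : continuous f -> a < t ->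
  is_derive t (1 : R) (fun s => \int[lebesgue_measure]_(u in `[a, s]) f u)%R (f t).
Proof.
move=> cf at_.
have [||dv dE] := @continuous_FTC1_closed R f a t (t + 1) _ _ at_ (cf t).
- by rewrite ltrDl.
- apply: continuous_compact_integrable; first exact: segment_compact.
  exact: continuous_subspaceT.
- by apply: DeriveDef => //; rewrite -derive1E.
Qed.

Lemma continuous_has_primitive p q (g : R -> 'M[R]_(p, q)) (a : R) x0 :
  continuous g ->
  exists x : R -> 'M[R]_(p, q),
    x a = x0 /\ forall t, a <= t -> is_derive t (1 : R) x (g t).
Proof.
move=> cg.
(* integrating from [a - 1] keeps [a] an interior point, as FTC1 requires *)
pose F i j s := (\int[lebesgue_measure]_(u in `[a - 1, s]) g u i j)%R.
exists (fun s => x0 + \matrix_(i, j) (F i j s - F i j a)); split.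
  by apply/matrixP => i j; rewrite !mxE subrr addr0.
move=> t at_; apply/is_derive_mxP => i j.
have cgij : continuous (fun u => g u i j).
  by move=> u; apply: (@continuous_comp _ _ _ g (fun M => M i j)); [exact: cg | exact: coord_continuous].
have a1t : a - 1 < t by rewrite (lt_le_trans _ at_)// ltrBlDr ltrDl.
have Fij := is_derive_integral cgij a1t.
have -> : (fun s => (x0 + \matrix_(i, j) (F i j s - F i j a)) i j) =
          cst (x0 i j) + (F i j - cst (F i j a)).
  by apply/funext => s; rewrite !mxE.
by rewrite -[g t i j]add0r -[g t i j]subr0; apply: is_deriveD.
Qed.

Lemma loc_lipschitz_on_continuous n m (D : set 'cV[R]_n) (f : 'cV[R]_n -> 'cV[R]_m) :
  loc_lipschitz_on D f -> {within D, continuous f}.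
Proof.
move=> flip; apply/subspace_continuousP => p Dp.
have [r r0 [L fL]] := flip p Dp.
have L1 : 0 < `|L| + 1 by rewrite ltr_wpDl.
apply/cvgrPdist_lt => e e0; near=> u.
have Du : D u by near: u; exact: withinT.
have /andP[ur ue] : (`|p - u| < r) && (`|p - u| < e / (`|L| + 1)).
  rewrite -lt_min; near: u; apply: cvg_within.
  apply: ((@cvgrPdist_lt _ _ _ _ (nbhs_filter p) id p).1 cvg_id).
  by rewrite lt_min r0 divr_gt0.
rewrite distrC in ur ue.
rewrite (le_lt_trans (fL p u Dp Du _ _)) ?subrr ?normr0// distrC.
apply: (@le_lt_trans _ _ ((`|L| + 1) * `|u - p|)).
  by rewrite ler_wpM2r// (le_trans (ler_norm L))// lerDl.
by rewrite mulrC -ltr_pdivlMr.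
Unshelve. all: by end_near. Qed.

Lemma is_derive_affine p q r (c : 'M[R]_(p, r)) (A : 'M[R]_(p, q))
    (x : R -> 'M[R]_(q, r)) (t : R) dx :
  is_derive t (1 : R) x dx -> is_derive t (1 : R) (fun s => c + A *m x s) (A *m dx).
Proof.
move=> /(is_derive_mulmx A) dAx.
by rewrite -[A *m dx]add0r; apply: is_deriveD.
Qed.

Lemma affine_continuous p q r (c : 'M[R]_(p, r)) (A : 'M[R]_(p, q)) :
  continuous (fun v : 'M[R]_(q, r) => c + A *m v).
Proof. by move=> v; apply: continuousD; [exact: cst_continuous | exact: mulmx_continuous]. Qed.

End calculus.

Section reduced_system.
Context {R : realType} {n m : nat}.
Variables (Gam : 'M[R]_(n, m)) (Rf : 'cV[R]_n -> 'cV[R]_m) (sigma : 'cV[R]_n).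

Local Notation full_field := (fun S => Gam *m Rf S).
Local Notation reduced_field := (fun x => Rf (sigma + Gam *m x)).
Local Notation X_sigma := [set x | nonneg (sigma + Gam *m x)].

Lemma ode_sol_shift J x : ode_sol reduced_field X_sigma J x ->
  ode_sol full_field (@nonneg R n) J (fun t => sigma + Gam *m x t).
Proof.
case=> [xX [xc xd]]; split=> //; split.
  apply: (@within_continuous_comp _ _ _ _ x (fun v => sigma + Gam *m v)) xc.
  by move=> v _; exact: affine_continuous.
by move=> t Jt t0; exact/is_derive_affine/xd.
Qed.

Lemma ode_sol_eq_of_shift_eq T x y :
  ode_sol reduced_field X_sigma `[0, T[ x ->
  ode_sol reduced_field X_sigma `[0, +oo[ y -> x 0 = y 0 ->
  (forall t, `[0, T[%classic t -> sigma + Gam *m x t = sigma + Gam *m y t) ->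
  forall t, `[0, T[%classic t -> x t = y t.
Proof.
case=> [_ [xc xd]] [_ [yc yd]] xy0 xyS t /[dup] tT /=; rewrite in_itv/= => /andP[t0 tT'].
have sub0t : `[0, t] `<=` `[0, T[%classic.
  by move=> s /=; rewrite !in_itv/= => /andP[-> /le_lt_trans->].
apply: (is_derive_segment_eq (d := fun s => reduced_field (x s))) t0 _ _ _ _ xy0.
- exact: continuous_subspaceW xc.
- by apply: continuous_subspaceW yc => s /=; rewrite !in_itv/= => /andP[->].
- move=> s; rewrite in_itv/= => /andP[s0 st].
  by apply: (xd s _ s0); apply: sub0t; rewrite /= in_itv/= (ltW s0) (ltW st).
- move=> s; rewrite in_itv/= => /andP[s0 st].
  rewrite xyS; last by apply: sub0t; rewrite /= in_itv/= (ltW s0) (ltW st).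
  by apply: (yd s _ s0); rewrite in_itv0y ltW.
Qed.

Hypothesis Rf_cont : {within @nonneg R n, continuous Rf}.

Lemma ode_sol_lift S x0 :
  ode_sol full_field (@nonneg R n) `[0, +oo[ S -> S 0 = sigma + Gam *m x0 ->
  exists y, [/\ ode_sol reduced_field X_sigma `[0, +oo[ y, y 0 = x0 &
                forall t, 0 <= t -> sigma + Gam *m y t = S t].
Proof.
case=> [SD [Sc Sd]] S0.
(* clamping time at 0 extends [Rf \o S] continuously to all of R *)
have RSc : continuous (fun t => Rf (S (Num.max t (0 : R)))).
  exact: (@continuous_max0_comp _ _ (Rf \o S) (within_continuous_comp_within SD Rf_cont Sc)).
have RSE t : 0 <= t -> Rf (S (Num.max t 0)) = Rf (S t) by move=> t0; rewrite max_l.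
have [y [y0 yd]] := continuous_has_primitive 0 x0 RSc.
have yc : {within `[0, +oo[, continuous y}.
  apply: derivable_within_continuous => t; rewrite in_itv/= andbT => t0.
  by case: (yd t t0).
have yS t : 0 <= t -> sigma + Gam *m y t = S t.
  move=> t0; apply: (@is_derive_segment_eq _ _ _ (fun s => sigma + Gam *m y s) S
    (fun s => Gam *m Rf (S s))) t0 _ _ _ _ _.
  - apply: (@within_continuous_comp _ _ _ _ y (fun v => sigma + Gam *m v)).
      by move=> v _; exact: affine_continuous.
    by apply: continuous_subspaceW yc => s /=; rewrite !in_itv/= => /andP[->].
  - by apply: continuous_subspaceW Sc => s /=; rewrite !in_itv/= => /andP[->].
  - move=> s; rewrite in_itv/= => /andP[s0 _]; rewrite -RSE ?ltW//.
    exact/is_derive_affine/yd/ltW.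
  - by move=> s; rewrite in_itv/= => /andP[s0 _]; apply: (Sd s _ s0); rewrite in_itv0y ltW.
  - by rewrite y0 S0.
exists y; split=> //; split=> [t|].
  by rewrite in_itv0y => t0 /=; rewrite yS//; apply: SD; rewrite in_itv0y.
split=> // t; rewrite in_itv0y => t0 tp.
by rewrite yS// -RSE//; exact: yd.
Qed.

End reduced_system.

Theorem lemma4 (R : realType) (n m : nat) (Gam : 'M[R]_(n, m))
  (Rf : 'cV[R]_n -> 'cV[R]_m)
  (Hlip : loc_lipschitz_on (@nonneg R n) Rf)
  (Hfc : forward_complete (fun S => Gam *m Rf S) (@nonneg R n))
  (sigma : 'cV[R]_n) (Hsigma : nonneg sigma) :
  forward_complete (fun x => Rf (sigma + Gam *m x))
                   [set x | nonneg (sigma + Gam *m x)] /\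
  ((forall S, ode_sol (fun S => Gam *m Rf S) (@nonneg R n) `[0, +oo[%classic S ->
       exists M : R, forall t, 0 <= t -> `|S t| <= M) ->
   forall x, ode_sol (fun x => Rf (sigma + Gam *m x))
                     [set x | nonneg (sigma + Gam *m x)] `[0, +oo[%classic x ->
       exists M : R, forall t, 0 <= t -> `|Gam *m x t| <= M).
Proof.
have Rf_cont := loc_lipschitz_on_continuous Hlip.
case: Hfc => [full_init full_ext]; split; first split.
- move=> x0 /full_init[S [solS S0]].
  by have [y [soly y0 _]] := ode_sol_lift Rf_cont solS S0; exists y.
- move=> T x T0 solx.
  have [S [solS SE]] := full_ext T _ T0 (ode_sol_shift solx).
  have T0' : `[0, T[%classic 0 by rewrite /= in_itv/= lexx.
  have [y [soly y0 yS]] := ode_sol_lift Rf_cont solS (SE 0 T0').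
  exists y; split=> // t tT; symmetry.
  apply: (ode_sol_eq_of_shift_eq solx soly) => // s sT.
  by rewrite yS ?SE//; case/andP: (sT : s \in `[0, T[).
- move=> full_bounded x /ode_sol_shift/full_bounded[M SM].
  exists (M + `|sigma|) => t t0.
  have -> : Gam *m x t = (sigma + Gam *m x t) - sigma by rewrite addrC addKr.
  by rewrite (le_trans (ler_normB _ _))// lerD2r SM.
Qed.
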